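(* Let $X=X(\Delta)$ be a smooth projective toric variety of dimension $n$ with rays $\rho_1,\dots,\rho_{n+r}$, and suppose there is a maximal cone $\sigma_0$ with $\sigma_0(1)=\{\rho_1,\dots,\rho_n\}$ such that every $\rho_{n+j}$ ($1\le j\le r$) is a combination of $\rho_1,\dots,\rho_n$ with non-positive coefficients. Write $\mathcal{P}_{n+j}:\rho_{n+j}+\sum_{i=1}^n\mathfrak{b}_{i,j}\rho_i=0$ ($1\le j\le r$). Then these are positive relations (all $\mathfrak{b}_{i,j}\in\mathbb{Z}_{\ge0}$). If $L=\mathcal{O}_X(D)$ with $D=\sum_{i=1}^{n+r}\mathfrak{a}_iD_{\rho_i}$ is globally generated, then $$\deg_L(\mathcal{P}_{n+j})=\mathfrak{a}_{n+j}+\sum_{i=1}^n\mathfrak{a}_i\mathfrak{b}_{i,j}\ge\beta,$$ where $\beta$ is the minimal $L$-degree of centred primitive relations.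
   Context: Rays are identified with primitive generators; $D_\rho$ is the torus-invariant divisor of $\rho$. A relation $\sum c_\rho\rho=0$ ($c_\rho\in\mathbb{Z}$, not all zero) is positive if all $c_\rho\ge0$. For $D=\sum a_\rho D_\rho$, $\phi_D$ equals $\langle m_D(\sigma),\cdot\rangle$ on each maximal cone $\sigma$, where $\langle m_D(\sigma),\rho\rangle=-a_\rho$ for $\rho\in\sigma(1)$; the $L$-degree of a relation $\sum c_\rho\rho=0$ is $-\sum c_\rho\phi_D(\rho)$. A primitive collection is a set of rays not generating a cone while every proper subset does; it is centred if its elements sum to $0$, giving the centred primitive relation $\sum_{\rho\in\mathcal{I}}\rho=0$. *)

From HB Require Import structures.
From mathcomp Require Import all_boot all_order all_algebra.
Set Implicit Arguments. Unset Strict Implicit. Unset Printing Implicit Defensive.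
Import Order.TTheory GRing.Theory Num.Theory.
Local Open Scope ring_scope.

Section Toric.
Variables (n m : nat) (ray : 'I_m -> 'rV[int]_n).

(* the pairing <u, v> between M = Z^n and N = Z^n *)
Definition pair (u v : 'rV[int]_n) : int := \sum_(k < n) u 0 k * v 0 k.

Definition inconeZ (S : {set 'I_m}) (v : 'rV[int]_n) : Prop :=
  exists c : 'I_m -> nat, (forall i, i \notin S -> c i = 0%N) /\
    v = \sum_(i in S) (c i)%:Z *: ray i.

Definition Zbasis (S : {set 'I_m}) : Prop :=
  forall v : 'rV[int]_n, exists! c : 'I_m -> int,
    (forall i, i \notin S -> c i = 0) /\ v = \sum_(i in S) c i *: ray i.

(* the maximal-cone data Max (sets of ray indices) define a smooth complete fan
   whose rays are exactly ray 0, ..., ray (m-1);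
   the cones of the fan are the cones generated by subsets of members of Max. *)
Definition smooth_complete_fan (Max : {set {set 'I_m}}) : Prop :=
  [/\ injective ray /\ (forall s, s \in Max -> #|s| = n),
      (forall s, s \in Max -> Zbasis s),
      (forall i, exists2 s, s \in Max & i \in s),
      (forall v, exists2 s, s \in Max & inconeZ s v) &
      (forall s t v, s \in Max -> t \in Max -> inconeZ s v -> inconeZ t v ->
          inconeZ (s :&: t) v)].

(* support-function data: m is m_D(s), i.e. <m, rho> = -a_rho for rho in s(1) *)
Definition is_mD (a : 'I_m -> int) (s : {set 'I_m}) (u : 'rV[int]_n) : Prop :=
  forall i, i \in s -> pair u (ray i) = - a i.

(* projective: there is a divisor with strictly convex support function (ample) *)
Definition projective_fan (Max : {set {set 'I_m}}) : Prop :=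
  exists a : 'I_m -> int, forall s, s \in Max -> exists u, is_mD a s u /\
    forall i, i \notin s -> - a i < pair u (ray i).

Definition smooth_projective_fan (Max : {set {set 'I_m}}) : Prop :=
  smooth_complete_fan Max /\ projective_fan Max.

(* O_X(D), D = sum a_i D_i, is globally generated (basepoint free):
   m_D(s) lies in P_D for every maximal cone s *)
Definition globally_generated (Max : {set {set 'I_m}}) (a : 'I_m -> int) : Prop :=
  forall s, s \in Max -> exists u, is_mD a s u /\
    forall i, - a i <= pair u (ray i).

Definition is_phiD (Max : {set {set 'I_m}}) (a : 'I_m -> int)
  (phi : 'rV[int]_n -> int) : Prop :=
  forall s, s \in Max -> exists u, is_mD a s u /\
    forall v, inconeZ s v -> phi v = pair u v.

Definition Ldeg (phi : 'rV[int]_n -> int) (c : 'I_m -> int) : int :=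
  - \sum_(i < m) c i * phi (ray i).

Definition is_relation (c : 'I_m -> int) : Prop :=
  (exists i, c i != 0) /\ \sum_(i < m) c i *: ray i = 0.

Definition is_cone (Max : {set {set 'I_m}}) (I : {set 'I_m}) : Prop :=
  exists2 s, s \in Max & I \subset s.

Definition primitive_collection (Max : {set {set 'I_m}}) (I : {set 'I_m}) : Prop :=
  ~ is_cone Max I /\ forall J : {set 'I_m}, J \proper I -> is_cone Max J.

Definition centred_primitive (Max : {set {set 'I_m}}) (I : {set 'I_m}) : Prop :=
  primitive_collection Max I /\ \sum_(i in I) ray i = 0.

(* coefficients of the centred primitive relation sum_{i in I} rho_i = 0 *)
Definition set_rel (I : {set 'I_m}) : 'I_m -> int := fun i => (i \in I)%:Z.

Definition is_min_centred_degree (Max : {set {set 'I_m}})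
  (phi : 'rV[int]_n -> int) (beta : int) : Prop :=
  (exists2 I, centred_primitive Max I & Ldeg phi (set_rel I) = beta) /\
  (forall I, centred_primitive Max I -> beta <= Ldeg phi (set_rel I)).

End Toric.

Definition ratv n (v : 'rV[int]_n) : 'rV[rat]_n := map_mx (fun x : int => x%:~R) v.

(* the relation P_{n+j} : rho_{n+j} + sum_i b_{i,j} rho_i = 0 *)
Definition Prel n r (b : 'I_n -> 'I_r -> int) (j : 'I_r) : 'I_(n + r) -> int :=
  fun k => match split k with inl i => b i j | inr j' => (j' == j)%:Z end.

From mathcomp Require Import all_boot all_order all_algebra.
From mathcomp Require Import zify.
Set Implicit Arguments. Unset Strict Implicit. Unset Printing Implicit Defensive.
Import Order.TTheory GRing.Theory Num.Theory.
Local Open Scope ring_scope.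

(* The b_{i,j} are minus the coordinates of rho_{n+j} in the basis rho_1, ..., rho_n
   of sigma_0, hence nonnegative.  For the degree bound, twist D by the character
   m_D(sigma_0): the twisted divisor p is still globally generated, nonnegative and
   zero on sigma_0(1), so deg_L(P_j) = p(rho_{n+j}).  Choose j1 minimising
   p(rho_{n+j}) and, among those, minimising q(rho_{n+j}) for an ample q normalised
   the same way.  If b_{i,j1} > 0 then
     -rho_i = rho_{n+j1} + sum_l (b_{l,j1} - delta_{il}) rho_l
   is a nonnegative combination.  A maximal cone tau containing -rho_i has a ray
   rho_{n+j} with positive coordinate (-rho_i is not in sigma_0), and convexity of the
   support functions of p and q, tested on these two expressions of -rho_i, forces
   every ray occurring on the right to lie in tau.  Hence b_{i,j1} = 1 and the rays of
   P_{j1} other than rho_i span a cone: the support of P_{j1} is a centred primitive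
   collection, and beta <= deg_L(P_{j1}) <= deg_L(P_j). *)

Section Pairing.
Variable n : nat.
Implicit Types u x y : 'rV[int]_n.

Lemma pairDr u x y : pair u (x + y) = pair u x + pair u y.
Proof. by rewrite /pair -big_split; apply: eq_bigr => k _; rewrite mxE mulrDr. Qed.

Lemma pair0r u : pair u 0 = 0.
Proof. by rewrite /pair big1 // => k _; rewrite mxE mulr0. Qed.

Lemma pairZr u c x : pair u (c *: x) = c * pair u x.
Proof. by rewrite /pair mulr_sumr; apply: eq_bigr => k _; rewrite mxE mulrCA. Qed.

Lemma pair_sumr u (I : Type) (s : seq I) (P : pred I) (F : I -> 'rV[int]_n) :
  pair u (\sum_(i <- s | P i) F i) = \sum_(i <- s | P i) pair u (F i).
Proof. exact: (big_morph _ (pairDr u) (pair0r u)). Qed.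

Lemma pairBl u u' x : pair (u - u') x = pair u x - pair u' x.
Proof. by rewrite /pair -sumrB; apply: eq_bigr => k _; rewrite !mxE mulrBl. Qed.

End Pairing.

Lemma spanning_ratv_free n (e : 'I_n -> 'rV[int]_n) :
  (forall v, exists c : 'I_n -> int, v = \sum_i c i *: e i) ->
  forall x : 'I_n -> rat, \sum_i x i *: ratv (e i) = 0 -> forall i, x i = 0.
Proof.
move=> span x x0 i.
pose E : 'M[int]_n := \matrix_k e k.
have [C CE] : exists C : 'M[int]_n, C *m E = 1%:M.
  have /fin_all_exists [c c_k] k : exists c : 'I_n -> int, delta_mx 0 k = \sum_l c l *: e l.
    exact: span.
  exists (\matrix_(k, l) c k l); apply/row_matrixP => k.
  rewrite row_mul mulmx_sum_row row1 c_k; apply: eq_bigr => l _.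
  by rewrite !mxE rowK.
pose toQ (A : 'M[int]_n) : 'M[rat]_n := map_mx (fun z : int => z%:~R) A.
have EC : toQ E *m toQ C = 1%:M.
  by apply: mulmx1C; rewrite -map_mxM CE map_mx1.
have xE : \row_k x k *m toQ E = 0.
  rewrite mulmx_sum_row -[RHS]x0; apply: eq_bigr => k _.
  by rewrite mxE -map_row rowK.
have -> : x i = (\row_k x k *m (toQ E *m toQ C)) 0 i by rewrite EC mulmx1 mxE.
by rewrite mulmxA xE mul0mx mxE.
Qed.

Lemma relation_coef_ge0 n (e : 'I_n -> 'rV[int]_n) (v : 'rV[int]_n)
    (b : 'I_n -> int) (c : 'I_n -> rat) :
  (forall w, exists k : 'I_n -> int, w = \sum_i k i *: e i) ->
  (forall i, c i <= 0) -> ratv v = \sum_i c i *: ratv (e i) ->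
  v + \sum_i b i *: e i = 0 -> forall i, 0 <= b i.
Proof.
move=> span c_le0 v_c v_b i.
have ratv_vb : ratv v + \sum_i (b i)%:~R *: ratv (e i) = 0.
  have := congr1 (@ratv n) v_b; rewrite /ratv raddfD raddf_sum raddf0 => vb0; rewrite -[RHS]vb0.
  by congr (_ + _); apply: eq_bigr => k _; apply/rowP => l; rewrite !mxE; symmetry; apply: intrM.
have : \sum_i (c i + (b i)%:~R) *: ratv (e i) = 0.
  by rewrite (eq_bigr _ (fun i _ => scalerDl _ _ _)) big_split /= -v_c ratv_vb.
move=> /(spanning_ratv_free span) /(_ i) /eqP; rewrite addr_eq0 => /eqP c_b.
by rewrite -(ler0z rat) -[X in _ <= X]opprK -c_b oppr_ge0.
Qed.

Section Fan.
Variables (n m : nat) (ray : 'I_m -> 'rV[int]_n) (Max : {set {set 'I_m}}).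

Lemma sum_over_support (S : {set 'I_m}) (c : 'I_m -> int) :
  (forall i, i \notin S -> c i = 0) ->
  \sum_(i in S) c i *: ray i = \sum_i c i *: ray i.
Proof.
move=> c0; rewrite big_mkcond; apply: eq_bigr => i _.
by case: ifPn => // /c0 ->; rewrite scale0r.
Qed.

Lemma Zbasis_coord_uniq S (c c' : 'I_m -> int) : Zbasis ray S ->
  (forall i, i \notin S -> c i = 0) -> (forall i, i \notin S -> c' i = 0) ->
  \sum_i c i *: ray i = \sum_i c' i *: ray i -> c =1 c'.
Proof.
move=> basisS c0 c'0 eq_cc' i.
have [c'' [_ uniq_c'']] := basisS (\sum_i c i *: ray i).
have <- := uniq_c'' c (conj c0 (esym (sum_over_support c0))).
by rewrite (uniq_c'' c') // eq_cc' (sum_over_support c'0).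
Qed.

Lemma Zbasis_relation S (c : 'I_m -> int) : Zbasis ray S ->
  (forall i, i \notin S -> c i = 0) -> \sum_i c i *: ray i = 0 -> forall i, c i = 0.
Proof.
move=> basisS c0 rel_c; apply: (Zbasis_coord_uniq basisS c0) => //.
by rewrite rel_c big1 // => i _; rewrite scale0r.
Qed.

Lemma Zbasis_opp_ray_notin_cone S i (d : 'I_m -> nat) : Zbasis ray S -> i \in S ->
  (forall y, y \notin S -> d y = 0%N) -> - ray i <> \sum_y (d y)%:Z *: ray y.
Proof.
move=> basisS iS d0 opp_i.
pose c y := (d y)%:Z + (y == i)%:Z.
have c0 y : y \notin S -> c y = 0.
  by move=> yS; rewrite /c d0 //; case: eqP yS => // ->; rewrite iS.
have rel_c : \sum_y c y *: ray y = 0.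
  rewrite (eq_bigr (fun y => (d y)%:Z *: ray y + (y == i)%:Z *: ray y)) => [|y _].
    rewrite big_split /= -opp_i (bigD1 i) //= eqxx scale1r big1 ?addr0 ?addNr //.
    by move=> y /negbTE ->; rewrite scale0r.
  by rewrite scalerDl.
by have := Zbasis_relation basisS c0 rel_c i; rewrite /c eqxx; lia.
Qed.

Lemma primitive_collection_of_coneD1 I : ~ is_cone Max I ->
  (forall x, x \in I -> is_cone Max (I :\ x)) -> primitive_collection Max I.
Proof.
move=> notI coneIx; split=> // J /properP [JI [x xI xJ]].
have [s sMax Ixs] := coneIx x xI; exists s => //; apply: subset_trans Ixs.
by apply/subsetP => y yJ; rewrite !inE (subsetP JI) // andbT; apply: contraNneq xJ => <-.
Qed.

Lemma relation_support_not_cone (c : 'I_m -> int) :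
  (forall s, s \in Max -> Zbasis ray s) -> is_relation ray c ->
  ~ is_cone Max [set i | c i != 0].
Proof.
move=> smooth [[i ci] rel_c] [s sMax supp_s]; move/eqP: ci; apply.
apply: Zbasis_relation (smooth s sMax) _ rel_c i => y; apply: contraNeq => cy.
by apply: (subsetP supp_s); rewrite inE.
Qed.

Lemma Ldeg_phiD a phi c : (forall i, exists2 s, s \in Max & i \in s) ->
  is_phiD ray Max a phi -> Ldeg ray phi c = \sum_i c i * a i.
Proof.
move=> cover phiD; rewrite /Ldeg -sumrN; apply: eq_bigr => i _.
have [s sMax i_s] := cover i; have [u [mDu phi_s]] := phiD s sMax.
rewrite phi_s ?mDu ?mulrN ?opprK //; exists (fun y => (y == i) : nat); split.
  by move=> y; case: eqP => // ->; rewrite i_s.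
rewrite (bigD1 i) //= eqxx scale1r big1 ?addr0 // => y /andP[_ /negbTE ->].
by rewrite scale0r.
Qed.

Lemma eq_Ldeg phi (c c' : 'I_m -> int) : c =1 c' -> Ldeg ray phi c = Ldeg ray phi c'.
Proof. by move=> eq_cc'; rewrite /Ldeg; under eq_bigr do rewrite eq_cc'. Qed.

(* The coefficients of the divisor D + div(chi^u) linearly equivalent to D. *)
Definition twist (a : 'I_m -> int) (u : 'rV[int]_n) i := a i + pair u (ray i).

(* [projective_fan Max] unfolds to [exists a, ample a]. *)
Definition ample (a : 'I_m -> int) := forall s, s \in Max -> exists u,
  is_mD ray a s u /\ forall i, i \notin s -> - a i < pair u (ray i).

Lemma sum_twist a u (c : 'I_m -> int) :
  \sum_i c i * twist a u i = \sum_i c i * a i + pair u (\sum_i c i *: ray i).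
Proof.
rewrite pair_sumr -big_split; apply: eq_bigr => i _.
by rewrite pairZr mulrDr.
Qed.

Lemma twist_mD a s u : is_mD ray a s u -> forall i, i \in s -> twist a u i = 0.
Proof. by move=> mDu i i_s; rewrite /twist mDu // subrr. Qed.

Lemma twist_ge0 a u : (forall i, - a i <= pair u (ray i)) -> forall i, 0 <= twist a u i.
Proof. by move=> u_ge i; have := u_ge i; rewrite /twist; lia. Qed.

Lemma twist_gt0 a u i : - a i < pair u (ray i) -> 0 < twist a u i.
Proof. by rewrite /twist; lia. Qed.

Lemma ample_twist_ge0 a s u : is_mD ray a s u ->
  (forall i, i \notin s -> - a i < pair u (ray i)) -> forall i, 0 <= twist a u i.
Proof.
move=> mDu u_gt i; case: (boolP (i \in s)) => [/(twist_mD mDu) -> //|/u_gt].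
by move/twist_gt0/ltW.
Qed.

Lemma Ldeg_twist a phi u c : (forall i, exists2 s, s \in Max & i \in s) ->
  is_phiD ray Max a phi -> \sum_i c i *: ray i = 0 ->
  Ldeg ray phi c = \sum_i c i * twist a u i.
Proof. by move=> cover phiD rel_c; rewrite sum_twist rel_c pair0r addr0; apply: Ldeg_phiD. Qed.

Lemma mD_twist a s u u' : is_mD ray a s u -> is_mD ray (twist a u') s (u - u').
Proof. by move=> mDu i i_s; rewrite pairBl mDu // /twist opprD. Qed.

Lemma globally_generated_twist a u :
  globally_generated ray Max a -> globally_generated ray Max (twist a u).
Proof.
move=> gg s sMax; have [us [mDus us_ge]] := gg s sMax.
exists (us - u); split=> [|i]; first exact: mD_twist.
by rewrite pairBl /twist opprD lerD2r.
Qed.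

Lemma ample_twist a u : ample a -> ample (twist a u).
Proof.
move=> ampl s sMax; have [us [mDus us_gt]] := ampl s sMax.
exists (us - u); split=> [|i i_s]; first exact: mD_twist.
by rewrite pairBl /twist opprD ltrD2r us_gt.
Qed.

Lemma cone_coord_gap a t u (d w : 'I_m -> int) : is_mD ray a t u ->
  (forall y, y \notin t -> d y = 0) ->
  \sum_y d y *: ray y = \sum_y w y *: ray y ->
  \sum_y w y * a y - \sum_y d y * a y = \sum_y w y * twist a u y.
Proof.
move=> mDu d0 eq_dw.
have : \sum_y d y * twist a u y = 0.
  by apply: big1 => y _; case: (boolP (y \in t)) => [/(twist_mD mDu) ->|/d0 ->];
    rewrite ?mulr0 ?mul0r.
by rewrite !sum_twist eq_dw => /eqP; rewrite addr_eq0 => /eqP ->; rewrite opprK.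
Qed.

Lemma gg_cone_coord_le a t (d w : 'I_m -> int) :
  globally_generated ray Max a -> t \in Max ->
  (forall y, y \notin t -> d y = 0) -> (forall y, 0 <= w y) ->
  \sum_y d y *: ray y = \sum_y w y *: ray y ->
  \sum_y d y * a y <= \sum_y w y * a y.
Proof.
move=> gg tMax d0 w_ge0 eq_dw; have [u [mDu u_ge]] := gg t tMax.
rewrite -subr_ge0 (cone_coord_gap mDu d0 eq_dw).
by apply: sumr_ge0 => y _; rewrite mulr_ge0 ?(twist_ge0 u_ge).
Qed.

Lemma ample_cone_coord_support a t (d w : 'I_m -> int) :
  ample a -> t \in Max ->
  (forall y, y \notin t -> d y = 0) -> (forall y, 0 <= w y) ->
  \sum_y d y *: ray y = \sum_y w y *: ray y ->
  \sum_y w y * a y <= \sum_y d y * a y -> forall y, w y != 0 -> y \in t.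
Proof.
move=> ampl tMax d0 w_ge0 eq_dw; have [u [mDu u_gt]] := ampl t tMax.
have u_ge0 := ample_twist_ge0 mDu u_gt.
rewrite -subr_le0 (cone_coord_gap mDu d0 eq_dw) => gap_le0 y wy.
have /(psumr_eq0P _) /(_ y isT) : \sum_y w y * twist a u y = 0.
  by apply/eqP; rewrite eq_le gap_le0 sumr_ge0 // => z _; rewrite mulr_ge0.
move/(_ (fun z _ => mulr_ge0 (w_ge0 z) (u_ge0 z)))/eqP.
rewrite mulf_eq0 (negbTE wy) /=; apply: contraTT => /u_gt/twist_gt0.
by rewrite lt0r => /andP[].
Qed.

End Fan.

Section SplitIndex.
Variables (n r : nat).

Lemma Prel_lshift (b : 'I_n -> 'I_r -> int) j i : Prel b j (lshift r i) = b i j.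
Proof. by rewrite /Prel -[lshift r i]/(unsplit (inl i)) unsplitK. Qed.

Lemma Prel_rshift (b : 'I_n -> 'I_r -> int) j j' : Prel b j (rshift n j') = (j' == j)%:Z.
Proof. by rewrite /Prel -[rshift n j']/(unsplit (inr j')) unsplitK. Qed.

Lemma sum_Prel (V : lmodType int) b j (F : 'I_(n + r) -> V) :
  \sum_x Prel b j x *: F x = F (rshift n j) + \sum_i b i j *: F (lshift r i).
Proof.
rewrite big_split_ord /= addrC; congr (_ + _); last first.
  by apply: eq_bigr => i _; rewrite Prel_lshift.
rewrite (bigD1 j) //= Prel_rshift eqxx scale1r big1 ?addr0 // => j' /negbTE j'j.
by rewrite Prel_rshift j'j scale0r.
Qed.

Lemma sum_Prel_mul b j (F : 'I_(n + r) -> int) :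
  \sum_x Prel b j x * F x = F (rshift n j) + \sum_i b i j * F (lshift r i).
Proof. exact: (@sum_Prel int^o). Qed.

Lemma sum_in_lshift (V : nmodType) (F : 'I_(n + r) -> V) :
  \sum_(x in [set x : 'I_(n + r) | (x < n)%N]) F x = \sum_i F (lshift r i).
Proof.
rewrite big_mkcond big_split_ord /= [X in _ + X]big1 ?addr0 => [|j _].
  by apply: eq_bigr => i _; rewrite inE /= ltn_ord.
by rewrite inE /= ltnNge leq_addr.
Qed.

Lemma lshift_spanning (ray : 'I_(n + r) -> 'rV[int]_n) :
  Zbasis ray [set x : 'I_(n + r) | (x < n)%N] ->
  forall v, exists c : 'I_n -> int, v = \sum_i c i *: ray (lshift r i).
Proof.
move=> basis0 v; have [c [[_ ->] _]] := basis0 v.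
by exists (fun i => c (lshift r i)); rewrite sum_in_lshift.
Qed.

End SplitIndex.

Section PrelDegree.
Variables (n r : nat) (ray : 'I_(n + r) -> 'rV[int]_n) (Max : {set {set 'I_(n + r)}}).
Variables (a : 'I_(n + r) -> int) (phi : 'rV[int]_n -> int).
Hypothesis cover : forall i, exists2 s, s \in Max & i \in s.
Hypothesis phiD : is_phiD ray Max a phi.
Variable b : 'I_n -> 'I_r -> int.

Lemma Ldeg_Prel j :
  Ldeg ray phi (Prel b j) = a (rshift n j) + \sum_i a (lshift r i) * b i j.
Proof.
rewrite (Ldeg_phiD _ cover phiD) sum_Prel_mul; congr (_ + _).
by apply: eq_bigr => i _; rewrite mulrC.
Qed.

Lemma Ldeg_Prel_twist j u :
  ray (rshift n j) + \sum_i b i j *: ray (lshift r i) = 0 ->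
  is_mD ray a [set x : 'I_(n + r) | (x < n)%N] u ->
  Ldeg ray phi (Prel b j) = twist ray a u (rshift n j).
Proof.
move=> b_rel mDu; rewrite (Ldeg_twist u cover phiD) ?sum_Prel // sum_Prel_mul.
by rewrite big1 ?addr0 // => i _; rewrite (twist_mD mDu) ?mulr0 // inE /= ltn_ord.
Qed.

End PrelDegree.

Lemma lex_arg_min (T : finType) (d : Order.disp_t) (R : orderType d) (x : T)
    (f g : T -> R) :
  exists y, (forall z, f y <= f z)%O /\ (forall z, f z = f y -> g y <= g z)%O.
Proof.
have [y0 _ y0_min] := arg_minP f (isT : predT x).
have [y /eqP fy y_min] := arg_minP g (eqxx _ : (fun z => f z == f y0) y0).
exists y; split=> [z|z]; first by rewrite fy y0_min.
by rewrite fy => /eqP; apply: y_min.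
Qed.

Section CentredPrimitive.
Variables (n r : nat) (ray : 'I_(n + r) -> 'rV[int]_n) (Max : {set {set 'I_(n + r)}}).
Hypothesis smooth : forall s, s \in Max -> Zbasis ray s.
Hypothesis complete : forall v, exists2 s, s \in Max & inconeZ ray s v.
Let S0 := [set i : 'I_(n + r) | (i < n)%N].
Hypothesis S0_Max : S0 \in Max.
Variable b : 'I_n -> 'I_r -> int.
Hypothesis b_rel : forall j, ray (rshift n j) + \sum_i b i j *: ray (lshift r i) = 0.
Hypothesis b_ge0 : forall i j, 0 <= b i j.
Variables p q : 'I_(n + r) -> int.
Hypotheses (p_gg : globally_generated ray Max p) (q_ample : ample ray Max q).
Hypotheses (p_ge0 : forall x, 0 <= p x) (q_ge0 : forall x, 0 <= q x).
Hypotheses (p_S0 : forall x, x \in S0 -> p x = 0) (q_S0 : forall x, x \in S0 -> q x = 0).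
Variable j1 : 'I_r.
Hypothesis p_min : forall j, p (rshift n j1) <= p (rshift n j).
Hypothesis q_min :
  forall j, p (rshift n j) = p (rshift n j1) -> q (rshift n j1) <= q (rshift n j).

Let negcoef (i : 'I_n) y := Prel b j1 y - (y == lshift r i)%:Z.

Fact lshift_S0 i : lshift r i \in S0.
Proof. by rewrite inE /= ltn_ord. Qed.

Lemma negcoef_ge0 i : b i j1 != 0 -> forall y, 0 <= negcoef i y.
Proof.
move=> bi0 y; rewrite /negcoef; case: (split_ordP y) => [l ->|j ->].
  rewrite Prel_lshift eq_lshift; have := b_ge0 l j1.
  by case: eqP => [->|_]; move: bi0; lia.
by rewrite Prel_rshift eq_rlshift; case: eqP.
Qed.

Lemma negcoef_rel i : \sum_y negcoef i y *: ray y = - ray (lshift r i).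
Proof.
rewrite (eq_bigr _ (fun y _ => scalerBl _ _ _)) sumrB sum_Prel b_rel sub0r.
rewrite (bigD1 (lshift r i)) //= eqxx scale1r big1 ?addr0 // => y /negbTE ->.
by rewrite scale0r.
Qed.

Lemma sum_negcoef_S0 i (F : 'I_(n + r) -> int) : (forall x, x \in S0 -> F x = 0) ->
  \sum_y negcoef i y * F y = F (rshift n j1).
Proof.
move=> F0; rewrite (eq_bigr _ (fun y _ => mulrBl _ _ _)) sumrB sum_Prel_mul.
rewrite big1 ?addr0 => [|l _]; last by rewrite F0 ?mulr0 ?lshift_S0.
rewrite (bigD1 (lshift r i)) //= eqxx mul1r (F0 _ (lshift_S0 i)) big1 ?subr0 // => y /negbTE ->.
by rewrite mul0r.
Qed.

Lemma negcoef_support i t (d : 'I_(n + r) -> nat) : b i j1 != 0 -> t \in Max ->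
  (forall y, y \notin t -> d y = 0%N) -> - ray (lshift r i) = \sum_y (d y)%:Z *: ray y ->
  forall y, negcoef i y != 0 -> y \in t.
Proof.
move=> bi0 tMax d0 d_rel; pose dZ y := (d y)%:Z.
have dZ0 y : y \notin t -> dZ y = 0 by move/d0; rewrite /dZ => ->.
have d_negcoef : \sum_y dZ y *: ray y = \sum_y negcoef i y *: ray y by rewrite negcoef_rel.
have dZ_ge F x : d x != 0%N -> (forall y, 0 <= F y) -> F x <= \sum_y dZ y * F y.
  move=> dx F_ge0; rewrite (bigD1 x) //= -[leLHS]addr0 lerD ?sumr_ge0 //.
    by rewrite ler_peMl // /dZ; lia.
  by move=> y _; rewrite mulr_ge0.
have [x [dx xS0]] : exists x, d x != 0%N /\ x \notin S0.
  case: (pickP (fun x => (d x != 0%N) && (x \notin S0))) => [x /andP[]|none].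
    by exists x.
  case: (Zbasis_opp_ray_notin_cone (smooth S0_Max) (lshift_S0 i) _ d_rel) => y yS0.
  by apply/eqP; have := none y; rewrite yS0 andbT => /negbFE.
case: (split_ordP x) xS0 dx => [l ->|j -> _ dx]; first by rewrite lshift_S0.
(* p(rho_{n+j1}) <= p(rho_{n+j}) <= sum d p <= sum negcoef p = p(rho_{n+j1}) *)
have p_eq : p (rshift n j) = p (rshift n j1).
  apply/eqP; rewrite eq_le p_min andbT -(sum_negcoef_S0 i p_S0).
  apply: le_trans (dZ_ge p _ dx p_ge0) _.
  exact: gg_cone_coord_le p_gg tMax dZ0 (negcoef_ge0 bi0) d_negcoef.
apply: (ample_cone_coord_support q_ample tMax dZ0 (negcoef_ge0 bi0) d_negcoef).
rewrite (sum_negcoef_S0 i q_S0); exact: le_trans (q_min p_eq) (dZ_ge q _ dx q_ge0).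
Qed.

Let I := [set x | Prel b j1 x != 0].

Lemma Prel_relation : is_relation ray (Prel b j1).
Proof.
split; last by rewrite sum_Prel b_rel.
by exists (rshift n j1); rewrite Prel_rshift eqxx.
Qed.

Lemma supportD1_lshift_cone i : b i j1 != 0 -> b i j1 = 1 /\ is_cone Max (I :\ lshift r i).
Proof.
move=> bi0; have [t tMax [d [d0 d_rel]]] := complete (- ray (lshift r i)).
rewrite (@sum_over_support _ _ ray t (fun y => (d y)%:Z)) in d_rel; last by move=> y /d0 ->.
have negcoef_t := negcoef_support bi0 tMax d0 d_rel.
have bi1 : b i j1 = 1.
  apply/eqP; apply: contraT => bi1.
  have it : lshift r i \in t by apply: negcoef_t; rewrite /negcoef Prel_lshift eqxx subr_eq0.
  by case: (Zbasis_opp_ray_notin_cone (smooth tMax) it d0 d_rel).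
split=> //; exists t => //; apply/subsetP => y; rewrite !inE => /andP[yi Py].
by apply: negcoef_t; rewrite /negcoef (negbTE yi) subr0.
Qed.

Lemma set_rel_support : set_rel I =1 Prel b j1.
Proof.
move=> x; rewrite /set_rel inE; case: (split_ordP x) => [l ->|j ->].
  rewrite Prel_lshift; have [->|bl0] := eqVneq (b l j1) 0; first by [].
  by rewrite (supportD1_lshift_cone bl0).1.
by rewrite Prel_rshift; case: (j == j1).
Qed.

Lemma centred_primitive_support : centred_primitive ray Max I.
Proof.
have [Prel_nz Prel_rel] := Prel_relation.
split; last first.
  rewrite -[RHS]Prel_rel big_mkcond; apply: eq_bigr => x _.
  by rewrite -set_rel_support /set_rel; case: (x \in I); rewrite ?scale1r ?scale0r.
apply: primitive_collection_of_coneD1 => [|x].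
  exact: relation_support_not_cone smooth Prel_relation.
case: (split_ordP x) => [l ->|j ->]; rewrite inE ?Prel_lshift ?Prel_rshift.
  by move=> /supportD1_lshift_cone [].
have [-> _|//] := eqVneq j j1; exists S0 => //; apply/subsetP => y.
rewrite !inE; case: (split_ordP y) => [l ->|j' ->] //.
by rewrite eq_rshift Prel_rshift; case: (j' == j1).
Qed.

Lemma Prel_centred_primitive :
  exists2 I, centred_primitive ray Max I & set_rel I =1 Prel b j1.
Proof. by exists I; [exact: centred_primitive_support | exact: set_rel_support]. Qed.

End CentredPrimitive.

Theorem mainTheorem9 (n r : nat) (ray : 'I_(n + r) -> 'rV[int]_n)
  (Max : {set {set 'I_(n + r)}})
  (Hfan : smooth_projective_fan ray Max)
  (Hs0 : [set i : 'I_(n + r) | (i < n)%N] \in Max)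
  (Hneg : forall j : 'I_r, exists c : 'I_n -> rat, (forall i, c i <= 0) /\
      ratv (ray (rshift n j)) = \sum_(i < n) c i *: ratv (ray (lshift r i)))
  (b : 'I_n -> 'I_r -> int)
  (Hb : forall j : 'I_r, ray (rshift n j) + \sum_(i < n) b i j *: ray (lshift r i) = 0)
  (a : 'I_(n + r) -> int)
  (Hgg : globally_generated ray Max a)
  (phi : 'rV[int]_n -> int) (Hphi : is_phiD ray Max a phi)
  (beta : int) (Hbeta : is_min_centred_degree ray Max phi beta) :
  (forall i j, 0 <= b i j) /\
  (forall j : 'I_r,
     Ldeg ray phi (Prel b j) = a (rshift n j) + \sum_(i < n) a (lshift r i) * b i j /\
     beta <= Ldeg ray phi (Prel b j)).
Proof.
have [[_ smooth cover complete _] [a2 a2_ample]] := Hfan.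
have b_ge0 i j : 0 <= b i j.
  have [c [c_le0 c_rel]] := Hneg j.
  exact: relation_coef_ge0 (lshift_spanning (smooth _ Hs0)) c_le0 c_rel (Hb j) i.
split=> // j; split; first exact: (Ldeg_Prel cover Hphi).
have [u0 [u0_mD u0_ge]] := Hgg _ Hs0; have [v0 [v0_mD v0_gt]] := a2_ample _ Hs0.
have Ldeg_p j' := Ldeg_Prel_twist cover Hphi (Hb j') u0_mD.
have [j1 [p_min q_min]] := lex_arg_min j (fun j => twist ray a u0 (rshift n j))
  (fun j => twist ray a2 v0 (rshift n j)).
have [I I_centred I_Prel] := Prel_centred_primitive smooth complete Hs0 Hb b_ge0
  (globally_generated_twist u0 Hgg) (ample_twist v0 a2_ample) (twist_ge0 u0_ge)
  (ample_twist_ge0 v0_mD v0_gt) (twist_mD u0_mD) (twist_mD v0_mD) p_min q_min.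
apply: le_trans (proj2 Hbeta I I_centred) _.
by rewrite (eq_Ldeg ray phi I_Prel) !Ldeg_p.
Qed.
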